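(* Let $(X,\sigma,\tau)$ be a separable, chronologically dense Lorentzian metric space satisfying the S-property. Then $\overline{\tau}:\overline{X}\times\overline{X}\to[0,\infty]$ is lower semicontinuous with respect to the chronological topology $\sigma_{chr}$ of $\overline X$ (product topology on $\overline X\times\overline X$).
   Context: A Lorentzian metric space $(X,\sigma,\tau)$ is a topological space with $\tau:X\times X\to[0,\infty]$ lower semicontinuous and satisfying $\tau(x,z)\geq\tau(x,y)+\tau(y,z)$ whenever $\tau(x,y),\tau(y,z)>0$. Write $x\ll y$ iff $\tau(x,y)>0$, $I^+(x)=\{y:x\ll y\}$, $I^-(x)=\{y:y\ll x\}$, $I^\pm[A]=\bigcup_{a\in A}I^\pm(a)$. Future (resp. past) chain: $x_n\ll x_{n+1}$ (resp. $x_{n+1}\ll x_n$) for all $n$. Separable: there is a countable $S$ with $x\ll y\Rightarrow\exists s\in S$, $x\ll s\ll y$. Chronologically dense: every $x$ with $I^-(x)\neq\emptyset$ (resp. $I^+(x)\neq\emptyset$) is the $\sigma$-limit of a future (resp. past) chain. Past set: $P=I^-[P]$; $\downarrow S=I^-[\{p:p\ll q\ \forall q\in S\}]$; IP: past set not the union of two proper past subsets; PIP: IP of the form $I^-(p)$; future sets, $\uparrow S$, IF, PIF dually. For nonempty IP $P$ and IF $F$, $P\sim_S F$ iff $P$ is a maximal IP in $\downarrow F$ and $F$ a maximal IF in $\uparrow P$; $P\sim_S\emptyset$ (resp. $\emptyset\sim_S F$) if the nonempty $P$ (resp. $F$) is S-related to no nonempty IF (resp. IP). S-property: for every $x$, $I^-(x)\sim_S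 I^+(x)$, and no PIF other than $I^+(x)$ (resp. PIP other than $I^-(x)$) is S-related to $I^-(x)$ (resp. $I^+(x)$). c-completion $\overline X=\{(P,F):P\sim_S F\}$. For a sequence $\{(P_n,F_n)\}$ in $\overline X$, $(P,F)\in L(\{(P_n,F_n)\})$ iff ($P\neq\emptyset\Rightarrow P\subset LI(P_n)$ and $P$ is a maximal IP in $LS(P_n)$) and ($F\neq\emptyset\Rightarrow F\subset LI(F_n)$ and $F$ is a maximal IF in $LS(F_n)$), where $LI(A_n)=\bigcup_n\bigcap_{k\ge n}A_k$, $LS(A_n)=\bigcap_n\bigcup_{k\ge n}A_k$. $\sigma_{chr}$: $C\subset\overline X$ is closed iff $L(s)\subset C$ for every sequence $s$ in $C$. $\overline\tau((P,F),(P',F'))=0$ if $F=\emptyset$ or $P'=\emptyset$, and otherwise $\lim_n\tau(q_n,p'_n)$ for any past chain $\{q_n\}$ with $I^+[\{q_n\}]=F$ and future chain $\{p'_n\}$ with $I^-[\{p'_n\}]=P'$ (well defined). *)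

From HB Require Import structures.
From mathcomp Require Import all_boot all_order all_algebra.
From mathcomp Require Import all_classical all_reals all_analysis.
Set Implicit Arguments. Unset Strict Implicit. Unset Printing Implicit Defensive.
Import Order.TTheory GRing.Theory Num.Theory.
Local Open Scope classical_set_scope.
Local Open Scope ereal_scope.

Section LMS.
Context {R : realType} {X : topologicalType}.
Variable tau : X -> X -> \bar R.

Definition is_LMS : Prop :=
  (forall x y, 0 <= tau x y) /\
  lower_semicontinuous (fun xy : X * X => tau xy.1 xy.2) /\
  (forall x y z, 0 < tau x y -> 0 < tau y z -> tau x y + tau y z <= tau x z).

Definition chr (x y : X) : Prop := 0 < tau x y.
Definition Ifut (x : X) : set X := [set y | chr x y].
Definition Ipast (x : X) : set X := [set y | chr y x].
Definition IfutS (A : set X) : set X := [set y | exists2 a, A a & chr a y].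
Definition IpastS (A : set X) : set X := [set y | exists2 a, A a & chr y a].

Definition future_chain (x : nat -> X) : Prop := forall n, chr (x n) (x n.+1).
Definition past_chain (x : nat -> X) : Prop := forall n, chr (x n.+1) (x n).

Definition separable : Prop :=
  exists S : set X, countable S /\
    forall x y, chr x y -> exists2 s, S s & chr x s /\ chr s y.

Definition chron_dense : Prop :=
  (forall x, Ipast x !=set0 ->
     exists xn : nat -> X, future_chain xn /\ xn @ \oo --> x) /\
  (forall x, Ifut x !=set0 ->
     exists xn : nat -> X, past_chain xn /\ xn @ \oo --> x).

Definition past_set (P : set X) : Prop := P = IpastS P.
Definition future_set (F : set X) : Prop := F = IfutS F.

Definition downS (S : set X) : set X := IpastS [set p | forall q, S q -> chr p q].
Definition upS (S : set X) : set X := IfutS [set p | forall q, S q -> chr q p].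

Definition IP (P : set X) : Prop :=
  P !=set0 /\ past_set P /\
  ~ (exists P1 P2, past_set P1 /\ past_set P2 /\ P1 `<` P /\ P2 `<` P /\
                   P = P1 `|` P2).
Definition IF (F : set X) : Prop :=
  F !=set0 /\ future_set F /\
  ~ (exists F1 F2, future_set F1 /\ future_set F2 /\ F1 `<` F /\ F2 `<` F /\
                   F = F1 `|` F2).

Definition maxIP (P A : set X) : Prop :=
  IP P /\ P `<=` A /\ (forall P', IP P' -> P `<=` P' -> P' `<=` A -> P' = P).
Definition maxIF (F A : set X) : Prop :=
  IF F /\ F `<=` A /\ (forall F', IF F' -> F `<=` F' -> F' `<=` A -> F' = F).

Definition Srel_ne (P F : set X) : Prop :=
  IP P /\ IF F /\ maxIP P (downS F) /\ maxIF F (upS P).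

(* S-relation including the empty set cases; (emptyset, emptyset) is never
   S-related. *)
Definition Srel (P F : set X) : Prop :=
  Srel_ne P F \/
  (IP P /\ F = set0 /\ forall F', IF F' -> ~ Srel_ne P F') \/
  (P = set0 /\ IF F /\ forall P', IP P' -> ~ Srel_ne P' F).

Definition S_property : Prop :=
  forall x, Srel (Ipast x) (Ifut x) /\
    (forall y, IF (Ifut y) -> Srel (Ipast x) (Ifut y) -> Ifut y = Ifut x) /\
    (forall y, IP (Ipast y) -> Srel (Ipast y) (Ifut x) -> Ipast y = Ipast x).

(* c-completion, as a set of pairs (P, F) *)
Definition Xbar : set (set X * set X) := [set pf | Srel pf.1 pf.2].

Definition LI (A : nat -> set X) : set X :=
  [set x | exists n, forall k, (n <= k)%N -> A k x].
Definition LS (A : nat -> set X) : set X :=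
  [set x | forall n, exists k, (n <= k)%N /\ A k x].

Definition Llim (s : nat -> set X * set X) : set (set X * set X) :=
  [set pf | Xbar pf /\
    (pf.1 !=set0 -> pf.1 `<=` LI (fun n => (s n).1) /\
                    maxIP pf.1 (LS (fun n => (s n).1))) /\
    (pf.2 !=set0 -> pf.2 `<=` LI (fun n => (s n).2) /\
                    maxIF pf.2 (LS (fun n => (s n).2)))].

(* chronological topology on Xbar, given by its closed sets *)
Definition chr_closed (C : set (set X * set X)) : Prop :=
  C `<=` Xbar /\
  forall s : nat -> set X * set X, (forall n, C (s n)) -> Llim s `<=` C.
Definition chr_open (U : set (set X * set X)) : Prop :=
  U `<=` Xbar /\ chr_closed (Xbar `\` U).

Definition taubar_spec (a b : set X * set X) (v : \bar R) : Prop :=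
  let F := a.2 in let P' := b.1 in
  (exists q p : nat -> X, past_chain q /\ IfutS (range q) = F /\
      future_chain p /\ IpastS (range p) = P' /\
      (fun n => tau (q n) (p n)) @ \oo --> v) /\
  (forall q p : nat -> X, past_chain q -> IfutS (range q) = F ->
      future_chain p -> IpastS (range p) = P' ->
      (fun n => tau (q n) (p n)) @ \oo --> v).

Definition taubar (a b : set X * set X) : \bar R :=
  if `[< a.2 = set0 \/ b.1 = set0 >] then 0 else xget 0 (taubar_spec a b).

(* lower semicontinuity of a function on Xbar x Xbar, w.r.t. the product
   of the chronological topologies (open boxes form a base). *)
Definition chr_lsc2 (f : set X * set X -> set X * set X -> \bar R) : Prop :=
  forall a b (r : R), Xbar a -> Xbar b -> r%:E < f a b ->
    exists U V, chr_open U /\ chr_open V /\ U a /\ V b /\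
      forall a' b', U a' -> V b' -> r%:E < f a' b'.

End LMS.

From mathcomp Require Import all_boot all_order all_algebra.
From mathcomp Require Import all_classical all_reals all_analysis.
Set Implicit Arguments. Unset Strict Implicit. Unset Printing Implicit Defensive.
Import Order.TTheory GRing.Theory Num.Theory.
Local Open Scope classical_set_scope.
Local Open Scope ereal_scope.

(* If q is a past chain generating F and p a future chain generating P', the
   reverse triangle inequality makes n |-> tau (q n) (p n) nondecreasing, so
   taubar ((P, F), (P', F')) is its supremum.  Given r < taubar, pick n with
   r < tau (q n) (p n).  The points of the completion whose future contains
   q n, resp. whose past contains p n, form chronologically open sets, and on
   them taubar stays above tau (q n) (p n), again by the reverse triangle
   inequality.  Separability is only used to generate every IF by a past chain
   (and every IP by a future chain). *)

Lemma countable_sub_range (T : choiceType) (A : set T) (x0 : T) :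
  countable A -> exists e : nat -> T, A `<=` range e.
Proof.
move=> /countable_injP[f finj].
exists (fun n => xget x0 [set a | A a /\ f a = n]) => a Aa; exists (f a) => //.
have [Ae fe] :=
  xgetPex x0 (ex_intro (fun b => A b /\ f b = f a) a (conj Aa erefl)).
by apply: finj; rewrite ?inE.
Qed.

Section Chronology.
Context {R : realType} {X : topologicalType} (tau : X -> X -> \bar R).
Hypothesis chr_trans : forall x y z, chr tau x y -> chr tau y z -> chr tau x z.

Lemma past_chain_chr (q : nat -> X) x k m :
  past_chain tau q -> chr tau (q k) x -> (k <= m)%N -> chr tau (q m) x.
Proof.
move=> qc qkx; elim: m => [|m IHm]; first by rewrite leqn0 => /eqP <-.
by rewrite leq_eqVlt ltnS => /orP[/eqP <- //|/IHm]; apply: chr_trans.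
Qed.

Lemma past_chain_IfutS (q : nat -> X) n :
  past_chain tau q -> IfutS tau (range q) (q n).
Proof. by move=> qc; exists (q n.+1); [exists n.+1|exact: qc]. Qed.

Lemma IfutS_sub (F A : set X) :
  future_set tau F -> A `<=` F -> IfutS tau A `<=` F.
Proof. by move=> Ffut AF y [a /AF Fa ay]; rewrite Ffut; exists a. Qed.

Hypothesis tau_sep : separable tau.

Lemma future_set_IfutS (A : set X) : future_set tau (IfutS tau A).
Proof.
have [S [_ Sint]] := tau_sep.
apply/seteqP; split => [y [a Aa ay]|y [z [a Aa az] zy]].
  by have [s _ [aSs sy]] := Sint _ _ ay; exists s => //; exists a.
by exists a => //; apply: chr_trans zy.
Qed.

Lemma IF_directed (F : set X) x y : IF tau F -> F x -> F y ->
  exists2 z, F z & chr tau z x /\ chr tau z y.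
Proof.
move=> [_ [Ffut Firr]] Fx Fy; apply: contrapT => nodir.
(* Without a common lower bound, [F] is the union of the two proper future
   subsets [F_ y] and [F_ x]. *)
pose F_ c := IfutS tau (F `\` Ipast tau c).
have F_sub c : F_ c `<=` F by apply: IfutS_sub => // ? [].
have F_proper c : F c -> F_ c `<` F.
  by move=> Fc; split => // /(_ c Fc)[z [_ nzc] zc]; apply: nzc.
apply: Firr; exists (F_ y), (F_ x).
split; [exact: future_set_IfutS|split; [exact: future_set_IfutS|]].
split; [exact: F_proper|split; [exact: F_proper|]].
apply/seteqP; split => [w Fw|w [/F_sub|/F_sub]] //.
move: Fw; rewrite {1}Ffut => -[z Fz zw].
have [zy|nzy] := pselect (chr tau z y); last by left; exists z.
by right; exists z => //; split => // zx; apply: nodir; exists z.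
Qed.

Lemma IF_past_chain (F : set X) :
  IF tau F -> exists q, past_chain tau q /\ IfutS tau (range q) = F.
Proof.
move=> FIF; have [[x0 Fx0] [Ffut _]] := FIF.
have [S [cS Sint]] := tau_sep.
have [e Se] := countable_sub_range x0 cS.
pose below n x z := [/\ F z, chr tau z x & (S `&` F) (e n) -> chr tau z (e n)].
have step n x : F x -> exists z, below n x z.
  move=> Fx; have [[Sen Fen]|nSFen] := pselect ((S `&` F) (e n)).
    by have [z Fz [zx zen]] := IF_directed FIF Fx Fen; exists z.
  by move: Fx; rewrite {1}Ffut => -[z Fz zx]; exists z.
have /choice[g gP] : forall nx : nat * X, exists z, F nx.2 -> below nx.1 nx.2 z.
  move=> [n x]; have [Fx|nFx] := pselect (F x); last by exists x => /nFx.
  by have [z ?] := step n x Fx; exists z.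
pose q n := iteri n (fun n x => g (n, x)) x0.
have qF n : F (q n) by elim: n => // n IHn; have [] := gP (n, q n) IHn.
have qbelow n : below n (q n) (q n.+1) := gP (n, q n) (qF n).
exists q; split; first by move=> n; have [] := qbelow n.
apply/seteqP; split; first by apply: IfutS_sub => // _ [n _ <-].
move=> w; rewrite {1}Ffut => -[u Fu uw].
have [s Ss [us sw]] := Sint _ _ uw.
have Fs : F s by rewrite Ffut; exists u.
have [n _ ens] := Se s Ss.
exists (q n.+1); first by exists n.+1.
by apply: chr_trans sw; have [_ _] := qbelow n; rewrite ens; apply.
Qed.

End Chronology.

Section ChronologyDual.
Context {R : realType} {X : topologicalType} (tau : X -> X -> \bar R).
Hypothesis chr_trans : forall x y z, chr tau x y -> chr tau y z -> chr tau x z.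

Let tau_op (x y : X) := tau y x.

Let chr_trans_op x y z : chr tau_op x y -> chr tau_op y z -> chr tau_op x z.
Proof. by move=> xy yz; apply: chr_trans yz xy. Qed.

Lemma future_chain_chr (p : nat -> X) x k m :
  future_chain tau p -> chr tau x (p k) -> (k <= m)%N -> chr tau x (p m).
Proof. exact: (past_chain_chr chr_trans_op). Qed.

Lemma future_chain_IpastS (p : nat -> X) n :
  future_chain tau p -> IpastS tau (range p) (p n).
Proof. exact: (@past_chain_IfutS _ _ tau_op). Qed.

Lemma IP_future_chain (P : set X) : separable tau ->
  IP tau P -> exists p, future_chain tau p /\ IpastS tau (range p) = P.
Proof.
move=> [S [cS Sint]]; apply: (IF_past_chain chr_trans_op).
by exists S; split => // x y /(Sint y x)[s Ss [ys sx]]; exists s.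
Qed.

End ChronologyDual.

Section TimeSeparation.
Context {R : realType} {X : topologicalType} (tau : X -> X -> \bar R).
Hypothesis tau_ge0 : forall x y, 0 <= tau x y.
Hypothesis tau_rev_tri :
  forall x y z, chr tau x y -> chr tau y z -> tau x y + tau y z <= tau x z.

Lemma chr_trans x y z : chr tau x y -> chr tau y z -> chr tau x z.
Proof.
move=> xy yz; apply: lt_le_trans (tau_rev_tri xy yz).
by apply: lt_le_trans xy _; rewrite leeDl.
Qed.

Lemma le_tau_chr x' x y y' :
  chr tau x' x -> chr tau y y' -> tau x y <= tau x' y'.
Proof.
move=> x'x yy'; have [xy|] := boolP (0 < tau x y); last first.
  by rewrite -leNgt => /le_trans; apply.
have xy' := chr_trans xy yy'.
apply: le_trans (tau_rev_tri x'x xy'); apply: le_trans (leeDr _ (tau_ge0 _ _)).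
by apply: le_trans (tau_rev_tri xy yy'); rewrite leeDl.
Qed.

Definition chain_sup (q p : nat -> X) :=
  ereal_sup (range (fun n => tau (q n) (p n))).

Section Chains.
Variables q p : nat -> X.
Hypotheses (qc : past_chain tau q) (pc : future_chain tau p).

Lemma chain_tau_cvg : (fun n => tau (q n) (p n)) @ \oo --> chain_sup q p.
Proof.
apply: ereal_nondecreasing_cvgn; apply/nondecreasing_seqP => n.
exact: le_tau_chr (qc n) (pc n).
Qed.

Lemma chain_tau_lim v :
  (fun n => tau (q n) (p n)) @ \oo --> v -> v = chain_sup q p.
Proof. move=> cv; exact: (cvg_unique (@ereal_hausdorff R) cv chain_tau_cvg). Qed.

Lemma chain_sup_ge0 : 0 <= chain_sup q p.
Proof.
by apply: le_trans (tau_ge0 (q 0) (p 0)) _; apply: ereal_sup_ubound; exists 0%N.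
Qed.

Lemma le_chain_sup x y :
  IfutS tau (range q) x -> IpastS tau (range p) y -> tau x y <= chain_sup q p.
Proof.
move=> [_ [k _ <-] qkx] [_ [j _ <-] ypj].
have qx := past_chain_chr chr_trans qc qkx (leq_maxl k j).
have yp := future_chain_chr chr_trans pc ypj (leq_maxr k j).
apply: le_trans (le_tau_chr qx yp) _.
by apply: ereal_sup_ubound; exists (maxn k j).
Qed.

End Chains.

Lemma chain_sup_le q p q' p' : past_chain tau q -> future_chain tau p ->
  past_chain tau q' -> future_chain tau p' ->
  IfutS tau (range q) `<=` IfutS tau (range q') ->
  IpastS tau (range p) `<=` IpastS tau (range p') ->
  chain_sup q p <= chain_sup q' p'.
Proof.
move=> qc pc qc' pc' qq' pp'; apply: ge_ereal_sup => _ [n _ <-].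
by apply: le_chain_sup => //; [apply: qq'; apply: past_chain_IfutS |
  apply: pp'; apply: future_chain_IpastS].
Qed.

Lemma taubar_chain (a b : set X * set X) q p :
  past_chain tau q -> IfutS tau (range q) = a.2 ->
  future_chain tau p -> IpastS tau (range p) = b.1 ->
  taubar tau a b = chain_sup q p.
Proof.
move=> qc qa pc pb.
have chain_sup_eq q' p' : past_chain tau q' -> IfutS tau (range q') = a.2 ->
    future_chain tau p' -> IpastS tau (range p') = b.1 ->
    chain_sup q' p' = chain_sup q p.
  move=> qc' qa' pc' pb'; apply/eqP; rewrite eq_le.
  by rewrite !chain_sup_le // ?qa ?qa' ?pb ?pb'.
rewrite /taubar asboolF; last first.
  case=> [a20|b10].
    by have := past_chain_IfutS 0 qc; rewrite qa a20.
  by have := future_chain_IpastS 0 pc; rewrite pb b10.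
have spec : taubar_spec tau a b (chain_sup q p).
  split; first by exists q, p; do !split => //; apply: chain_tau_cvg.
  move=> q' p' qc' qa' pc' pb'; rewrite -(chain_sup_eq q' p') //.
  exact: chain_tau_cvg.
have [_ /(_ q p qc qa pc pb)] := xgetPex 0 (ex_intro _ _ spec).
exact: chain_tau_lim.
Qed.

Lemma taubar_ge0 (a b : set X * set X) : 0 <= taubar tau a b.
Proof.
rewrite /taubar; case: asboolP => // _.
case: xgetP => // v _ [[q [p [qc [_ [pc [_ /(chain_tau_lim qc pc) ->]]]]]] _].
exact: chain_sup_ge0.
Qed.

End TimeSeparation.

Section ChronologicalTopology.
Context {R : realType} {X : topologicalType} (tau : X -> X -> \bar R).

Lemma Xbar_IF a : Xbar tau a -> a.2 !=set0 -> IF tau a.2.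
Proof. by case=> [[_ []]|[[_ [-> _]]|[_ []]]] // []. Qed.

Lemma Xbar_IP a : Xbar tau a -> a.1 !=set0 -> IP tau a.1.
Proof. by case=> [[]|[[]|[-> _]]] // []. Qed.

Lemma taubar_set0 a b : a.2 = set0 \/ b.1 = set0 -> taubar tau a b = 0.
Proof. by move=> ab0; rewrite /taubar asboolT. Qed.

Lemma chr_open_Xbar : chr_open tau (Xbar tau).
Proof. by split => //; split => [? []|s /(_ 0%N)[]]. Qed.

Lemma chr_open_future_contains x : chr_open tau [set a | Xbar tau a /\ a.2 x].
Proof.
split=> [? []//|]; split=> [? []//|s sC a [Xa [_ aLI]]]; split=> // -[_ a2x].
have [n sn] := (aLI (ex_intro _ x a2x)).1 x a2x.
by have [Xsn] := sC n; apply; split=> //; apply: sn.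
Qed.

Lemma chr_open_past_contains y : chr_open tau [set b | Xbar tau b /\ b.1 y].
Proof.
split=> [? []//|]; split=> [? []//|s sC b [Xb [bLI _]]]; split=> // -[_ b1y].
have [n sn] := (bLI (ex_intro _ y b1y)).1 y b1y.
by have [Xsn] := sC n; apply; split=> //; apply: sn.
Qed.

End ChronologicalTopology.

Section TaubarLowerSemicontinuity.
Context {R : realType} {X : topologicalType} (tau : X -> X -> \bar R).
Hypothesis tau_ge0 : forall x y, 0 <= tau x y.
Hypothesis tau_rev_tri :
  forall x y z, chr tau x y -> chr tau y z -> tau x y + tau y z <= tau x z.
Hypothesis tau_sep : separable tau.

Let tau_chr_trans := chr_trans tau_ge0 tau_rev_tri.

Lemma Xbar_chains a b : Xbar tau a -> Xbar tau b -> a.2 !=set0 -> b.1 !=set0 ->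
  exists q p, [/\ past_chain tau q, IfutS tau (range q) = a.2,
    future_chain tau p, IpastS tau (range p) = b.1 &
    taubar tau a b = chain_sup tau q p].
Proof.
move=> Xa Xb a2 b1.
have [q [qc qa]] := IF_past_chain tau_chr_trans tau_sep (Xbar_IF Xa a2).
have [p [pc pb]] := IP_future_chain tau_chr_trans tau_sep (Xbar_IP Xb b1).
by exists q, p; split => //; apply: taubar_chain.
Qed.

Lemma le_tau_taubar a b x y : Xbar tau a -> Xbar tau b -> a.2 x -> b.1 y ->
  tau x y <= taubar tau a b.
Proof.
move=> Xa Xb a2x b1y.
have [q [p [qc qa pc pb ->]]] :=
  Xbar_chains Xa Xb (ex_intro _ x a2x) (ex_intro _ y b1y).
by apply: le_chain_sup; rewrite ?qa ?pb.
Qed.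

Lemma lt_taubar_tau a b (r : R) : Xbar tau a -> Xbar tau b -> (0 <= r)%R ->
  r%:E < taubar tau a b -> exists x y, [/\ a.2 x, b.1 y & r%:E < tau x y].
Proof.
move=> Xa Xb r0 rlt.
have taubar_gt0 : ~ (a.2 = set0 \/ b.1 = set0).
  by move=> /taubar_set0 ab0; move: rlt; rewrite ab0 lte_fin ltNge r0.
have a2 : a.2 !=set0 by apply/set0P/eqP => a20; apply: taubar_gt0; left.
have b1 : b.1 !=set0 by apply/set0P/eqP => b10; apply: taubar_gt0; right.
have [q [p [qc qa pc pb ab]]] := Xbar_chains Xa Xb a2 b1.
move: rlt; rewrite ab => /ereal_sup_gt[_ [n _ <-] rn].
exists (q n), (p n); split => //; rewrite -?qa -?pb.
  exact: past_chain_IfutS.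
exact: future_chain_IpastS.
Qed.

End TaubarLowerSemicontinuity.

Theorem mainTheorem18 (R : realType) (X : topologicalType)
  (tau : X -> X -> \bar R) :
  is_LMS tau -> separable tau -> chron_dense tau -> S_property tau ->
  chr_lsc2 tau (taubar tau).
Proof.
move=> [tau_ge0 [_ tau_rev_tri]] tau_sep _ _ a b r Xa Xb rlt.
have [r_lt0|r_ge0] := ltP r 0%R.
  have Xbar_open := chr_open_Xbar tau.
  exists (Xbar tau), (Xbar tau).
  split=> //; split=> //; split=> //; split=> // a' b' _ _.
  apply: lt_le_trans (taubar_ge0 tau_ge0 tau_rev_tri a' b').
  by rewrite lte_fin.
have [x [y [a2x b1y rxy]]] :=
  lt_taubar_tau tau_ge0 tau_rev_tri tau_sep Xa Xb r_ge0 rlt.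
exists [set a | Xbar tau a /\ a.2 x], [set b | Xbar tau b /\ b.1 y].
split; first exact: chr_open_future_contains.
split; first exact: chr_open_past_contains.
split=> //; split=> // a' b' [Xa' a'x] [Xb' b'y].
by apply: lt_le_trans rxy _; apply: le_tau_taubar.
Qed.
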